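(* Let $\mathcal X$ be finite with $N=|\mathcal X|\ge2$, let $0<c<1/N$ and $\varepsilon\ge\log\frac{2}{Nc}$. Then for every convex $f:(0,\infty)\to\mathbb R$ with $f(1)=0$ that is twice continuously differentiable with $f''(1)>0$, $$\sup_{K\in\mathcal M(\varepsilon,c)}\eta_f(K)=1.$$
   Context: For such $f$ and distributions $P\ll Q$ on a finite set, $D_f(P\|Q)=\sum_y Q(y)f\big(P(y)/Q(y)\big)$. For a kernel $K$ (row-stochastic matrix with entries $K_{Y|X=x}(y)$, $(K\circ P_X)(y)=\sum_xK_{Y|X=x}(y)P_X(x)$), $\eta_f(K)=\sup\frac{D_f(K\circ P_X\|K\circ Q_X)}{D_f(P_X\|Q_X)}$, the supremum over pairs of distributions on $\mathcal X$ with $0<D_f(P_X\|Q_X)<\infty$. PML: $\ell_{K\times P_X}(X\to y)=\log\frac{\max_x K_{Y|X=x}(y)}{(K\circ P_X)(y)}$ for full-support $P_X$ and $(K\circ P_X)(y)>0$. $\mathcal Q_{\mathcal X}(c)=\{P_X:\min_xP_X(x)\ge c\}$; $C(K,\mathcal P)=\sup_{P_X\in\mathcal P}\sup_{y:(K\circ P_X)(y)>0}\ell_{K\times P_X}(X\to y)$; $\mathcal M(\varepsilon,c)$ is the set of kernels from $\mathcal X$ to any finite output set with $C(K,\mathcal Q_{\mathcal X}(c))\le\varepsilon$. *)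

From HB Require Import structures.
From mathcomp Require Import all_boot all_order all_algebra.
From mathcomp Require Import all_classical all_reals all_analysis.
Set Implicit Arguments. Unset Strict Implicit. Unset Printing Implicit Defensive.
Import Order.TTheory GRing.Theory Num.Theory.
Import numFieldNormedType.Exports.
Local Open Scope classical_set_scope.
Local Open Scope ring_scope.

Section Defs.
Variable R : realType.

Definition is_dist (T : finType) (P : T -> R) : Prop :=
  (forall t, 0 <= P t) /\ \sum_(t : T) P t = 1.

Definition is_kernel (X Y : finType) (K : X -> Y -> R) : Prop :=
  forall x, is_dist (K x).

Definition push (X Y : finType) (K : X -> Y -> R) (P : X -> R) : Y -> R :=
  fun y => \sum_(x : X) K x y * P x.

Definition abs_cont (T : finType) (P Q : T -> R) : Prop :=
  forall t, Q t = 0 -> P t = 0.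

(* f(0) := lim_{t -> 0+} f t, in the extended reals (f is only given on (0,oo)) *)
Definition f_at0 (f : R -> R) : \bar R :=
  lim ((fun t => (f t)%:E) @ 0^'+).

Definition Df (f : R -> R) (T : finType) (P Q : T -> R) : \bar R :=
  (\sum_(t : T | Q t != 0%R)
     (if P t == 0%R then (Q t)%:E * f_at0 f else (Q t * f (P t / Q t))%:E))%E.

Definition eta_f (f : R -> R) (X Y : finType) (K : X -> Y -> R) : \bar R :=
  ereal_sup [set r : \bar R | exists (P Q : X -> R),
    [/\ is_dist P /\ is_dist Q, abs_cont P Q,
        (0 < Df f P Q)%E, (Df f P Q < +oo)%E &
        r = (Df f (push K P) (push K Q) * ((fine (Df f P Q))^-1)%:E)%E]].

Definition kmax (X Y : finType) (K : X -> Y -> R) (y : Y) : R :=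
  \big[Num.max/0]_(x : X) K x y.

Definition pml (X Y : finType) (K : X -> Y -> R) (P : X -> R) (y : Y) : R :=
  ln (kmax K y / push K P y).

Definition Qc (X : finType) (c : R) : set (X -> R) :=
  [set P | is_dist P /\ forall x, c <= P x].

Definition Cleak (X Y : finType) (K : X -> Y -> R) (Pset : set (X -> R)) : \bar R :=
  ereal_sup [set r : \bar R | exists P y,
    [/\ Pset P, 0 < push K P y & r = (pml K P y)%:E]].

Definition in_M (X Y : finType) (eps c : R) (K : X -> Y -> R) : Prop :=
  is_kernel K /\ (Cleak K (@Qc X c) <= eps%:E)%E.

Definition convex_pos (f : R -> R) : Prop :=
  forall x y t, 0 < x -> 0 < y -> 0 <= t -> t <= 1 ->
    f (t * x + (1 - t) * y) <= t * f x + (1 - t) * f y.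

Definition C2_pos (f : R -> R) : Prop :=
  (forall x, 0 < x -> derivable f x 1) /\
  (forall x, 0 < x -> derivable (derive1 f) x 1) /\
  (forall x, 0 < x -> {for x, continuous (derive1 (derive1 f))}).

End Defs.

(* Upper bound: the perspective (p, q) |-> q f (p / q) lies above its tangent
   planes, also at p = 0 once f 0 is read as f (0+) >= f m - m f'(m); so Jensen
   over the inputs gives, output by output, the data-processing inequality and
   eta_f K <= 1 for every kernel.
   Lower bound: for x1 <> x2, send x1 to one output, x2 to the other and every
   other input to both with probability 1/2.  Under any P in Q(c) each output has
   probability at least N c / 2, so the leakage is at most log (2 / (N c)).  The
   kernel is lossless on distributions supported on {x1, x2}, and f''(1) > 0
   provides such a pair, ((1+u)/2, (1-u)/2) against (1/2, 1/2), with positive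
   divergence; hence its contraction coefficient is 1. *)

From HB Require Import structures.
From mathcomp Require Import all_boot all_order all_algebra perm.
From mathcomp Require Import all_classical all_reals all_analysis.
From mathcomp Require Import ring lra.
Import Order.TTheory GRing.Theory Num.Theory.
Import numFieldNormedType.Exports.
Local Open Scope classical_set_scope.
Local Open Scope ring_scope.

Lemma derive1_gt_right {R : realType} {g : R -> R} {x d : R} :
  derivable g x 1 -> 0 < derive1 g x -> 0 < d ->
  exists2 h, 0 < h < d & g x < g (x + h).
Proof.
move=> dg g'x d0.
have := cvg_dnbhs_at_right dg; rewrite -/(derive g x 1) -derive1E.
move=> /cvgr_gt/(_ 0 g'x) quot_pos.
have : \forall h \near 0^'+,
    [/\ 0 < h, h < d & 0 < h^-1 *: ((g \o shift x) (h *: 1) - g x)].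
  near=> h; split.
  - by near: h; exact: nbhs_right_gt.
  - by near: h; exact: nbhs_right_lt.
  - by near: h; exact: quot_pos.
move=> /filter_ex[h [h0 hd]]; rewrite /= -[h%:A]/(h * 1) mulr1.
rewrite pmulr_rgt0 ?invr_gt0 // subr_gt0 addrC => gh.
by exists h; rewrite ?h0 ?hd.
Unshelve. all: by end_near. Qed.

Lemma push_ge0 (R : realType) (X Y : finType) (K : X -> Y -> R) (P : X -> R) :
  is_kernel K -> (forall x, 0 <= P x) -> forall y, 0 <= push K P y.
Proof.
by move=> HK P0 y; apply: sumr_ge0 => x _; rewrite mulr_ge0 //; case: (HK x).
Qed.

Lemma abs_cont_push (R : realType) (X Y : finType) (K : X -> Y -> R) (P Q : X -> R) :
  is_kernel K -> (forall x, 0 <= Q x) -> abs_cont P Q ->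
  abs_cont (push K P) (push K Q).
Proof.
move=> HK Q0 PQ y KQy; apply: big1 => x _.
have KQ0 i : true -> 0 <= K i y * Q i by move=> _; rewrite mulr_ge0 //; case: (HK i).
have /eqP := psumr_eq0P KQ0 KQy (i := x) isT.
by rewrite mulf_eq0 => /orP[/eqP -> | /eqP /PQ ->]; rewrite ?mul0r ?mulr0.
Qed.

(* [q f (p / q)], where [l] plays the role of [f 0] *)
Definition perspective {R : realType} (f : R -> R) (l p q : R) : R :=
  if p == 0 then q * l else q * f (p / q).

Definition tangent_intercepts_le {R : realType} (f : R -> R) (l : R) : Prop :=
  forall m, 0 < m -> f m - derive1 f m * m <= l.

Lemma Df_perspective (R : realType) (T : finType) (f : R -> R) (l : R) (P Q : T -> R) :
  f_at0 f = l%:E \/ abs_cont Q P ->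
  Df f P Q = (\sum_(t | Q t != 0) perspective f l (P t) (Q t))%:E.
Proof.
move=> hl; rewrite /Df -sumEFin; apply: eq_bigr => t Qt; rewrite /perspective.
case: ifPn => // /eqP Pt; case: hl => [-> // | QP].
by rewrite (QP t Pt) eqxx in Qt.
Qed.

Lemma Df_fin_abs_cont {R : realType} {T : finType} {f : R -> R} {P Q : T -> R} :
  (forall t, 0 <= Q t) -> f_at0 f \isn't a fin_num ->
  (0 < Df f P Q)%E -> (Df f P Q < +oo)%E -> abs_cont Q P.
Proof.
move=> Q0 f0_inf D0 Doo t Pt; have [// | Qt] := eqVneq (Q t) 0; exfalso.
have Qt_gt0 : 0 < Q t by rewrite lt_def Qt Q0.
move: f0_inf D0 Doo; rewrite /Df; case: (f_at0 f) => [r | |] //= _.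
- move=> _; rewrite lt_neqAle => /andP[/negP + _]; apply.
  apply/eqP/esum_eqyP.
    move=> i Qi; case: ifPn => _ //; rewrite gt0_muley //.
    by rewrite lte_fin lt_def Qi Q0.
  by exists t; rewrite Pt eqxx gt0_muley ?lte_fin.
- move=> D0 _; set S := (X in (_ < X)%E) in D0.
  suff S_eqNy : S = -oo%E by rewrite S_eqNy in D0.
  by apply/esum_eqNyP; exists t; rewrite Pt eqxx gt0_muleNy ?lte_fin.
Qed.

Section ConvexPos.
Context {R : realType} {f : R -> R}.
Hypothesis cvx : convex_pos f.

Lemma convex_pos_tangent {m s : R} : derivable f m 1 -> 0 < m -> 0 < s ->
  f m + derive1 f m * (s - m) <= f s.
Proof.
move=> dm m0 s0.
have dfm : differentiable f m by apply/derivable1_diffP.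
have dv : derivable f m (s - m) by apply: diff_derivable.
have Dv : 'D_(s - m) f m = (s - m) * derive1 f m.
  rewrite deriveE // derive1E' // -[X in 'd f m X]mulr1.
  by rewrite -[(s - m) * 1]/((s - m) *: (1:R^o)) linearZ.
have := cvg_dnbhs_at_right dv; rewrite -/(derive f m _) Dv => cv.
rewrite -lerBrDl mulrC; apply: (cvgr_to_le cv); near=> t.
have t0 : 0 < t by near: t; exact: nbhs_right_gt.
have t1 : t < 1 by near: t; exact: nbhs_right_lt.
rewrite /= ler_pdivrMl //.
have := cvx _ _ _ s0 m0 (ltW t0) (ltW t1).
have -> : t * s + (1 - t) * m = t *: (s - m) + m by rewrite -[t *: _]/(t * _); ring.
lra.
Unshelve. all: by end_near. Qed.

Hypothesis df : forall {x : R}, 0 < x -> derivable f x 1.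

Lemma derive1_pos_le {x y : R} : 0 < x -> x <= y -> derive1 f x <= derive1 f y.
Proof.
move=> x0; rewrite le_eqVlt => /predU1P[-> // | xy].
have y0 := lt_trans x0 xy.
have := convex_pos_tangent (df x0) x0 y0; have := convex_pos_tangent (df y0) y0 x0.
nra.
Qed.

Lemma cvg_f_at0 b : (f t + b * t)%:E @[t --> 0^'+] --> f_at0 f.
Proof.
pose a := derive1 f 1; pose g t := (f t - a * t)%:E.
have g_noninc : {in `]0, 1[ &, nonincreasing_fun g}.
  move=> x y; rewrite !in_itv /= => /andP[x0 _] /andP[y0 y1] xy.
  have := convex_pos_tangent (df y0) y0 x0.
  have := derive1_pos_le y0 (ltW y1).
  rewrite /g lee_fin /a; nra.
have := @nonincreasing_at_right_cvge R g 0 (BLeft 1) ltac:(by rewrite bnd_simp) g_noninc.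
set G := ereal_sup _ => g_cvg.
have cvgG b' : (f t + b' * t)%:E @[t --> 0^'+] --> G.
  have -> : (fun t => (f t + b' * t)%:E) = g \+ (fun t => ((a + b') * t)%:E).
    by apply/funext => t; rewrite /g /= -EFinD; congr (_%:E); ring.
  rewrite -[G]adde0; apply: cvgeD => //; first exact: fin_num_adde_defl.
  apply: cvg_EFin; first exact: nearW.
  rewrite -[X in _ --> X](mulr0 (a + b')); apply: cvg_at_right_filter.
  exact: cvgM (cvg_cst _) cvg_id.
suff -> : f_at0 f = G by exact: cvgG.
apply: cvg_lim => //; have := cvgG 0.
by under eq_fun do rewrite mul0r addr0.
Qed.

Lemma f_at0_tangent_intercepts_le {l : R} :
  f_at0 f = l%:E -> tangent_intercepts_le f l.
Proof.
move=> fl m m0; have := cvg_f_at0 (- derive1 f m); rewrite fl => /fine_cvgP[_ cv].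
apply: (cvgr_to_ge cv); near=> t.
have t0 : 0 < t by near: t; exact: nbhs_right_gt.
have := convex_pos_tangent (df m0) m0 t0.
rewrite /=; nra.
Unshelve. all: by end_near. Qed.

Lemma convex_midpoint_gap : derivable (derive1 f) 1 1 ->
  0 < derive1 (derive1 f) 1 ->
  exists u, [/\ 0 < u, u < 1 & 2 * f 1 < f (1 + u) + f (1 - u)].
Proof.
move=> ddf f''1.
have half_pos : (0 : R) < 1 / 2 by lra.
have [h /andP[h0 h_half] f'h] := derive1_gt_right ddf f''1 half_pos.
exists (2 * h); split; [lra | lra |].
have h1 : 0 < 1 + h by lra.
have h2p : 0 < 1 + 2 * h by lra.
have h2m : 0 < 1 - 2 * h by lra.
have := convex_pos_tangent (df h1) h1 h2p.
have := convex_pos_tangent (df ltr01) ltr01 h1.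
have := convex_pos_tangent (df ltr01) ltr01 h2m.
have : 0 < (derive1 f (1 + h) - derive1 f 1) * h by rewrite mulr_gt0 // subr_gt0.
nra.
Qed.

Lemma perspective_ge_tangent {l m p q : R} : 0 < m -> 0 < q -> 0 <= p ->
  tangent_intercepts_le f l \/ p != 0 ->
  q * f m + derive1 f m * (p - m * q) <= perspective f l p q.
Proof.
move=> m0 q0 p0 hl; rewrite /perspective.
have [p_eq0 | pn0] := eqVneq p 0.
  case: hl => [hl | ]; last by rewrite p_eq0 eqxx.
  rewrite p_eq0; have := hl m m0; nra.
have pq0 : 0 < p / q by rewrite divr_gt0 // lt_def pn0.
have -> : q * f m + derive1 f m * (p - m * q) =
    q * (f m + derive1 f m * (p / q - m)) by field; rewrite gt_eqF.
rewrite ler_pM2l //; exact: convex_pos_tangent (df m0) m0 pq0.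
Qed.

Lemma perspective_jensen (I : finType) (l : R) (w P Q : I -> R) :
  (forall i, 0 <= w i) -> (forall i, 0 <= P i) -> (forall i, 0 <= Q i) ->
  abs_cont P Q -> tangent_intercepts_le f l \/ abs_cont Q P ->
  0 < \sum_i w i * Q i ->
  perspective f l (\sum_i w i * P i) (\sum_i w i * Q i) <=
    \sum_(i | Q i != 0) w i * perspective f l (P i) (Q i).
Proof.
move=> w0 P0 Q0 PQ hl wQ_gt0.
have wP_ge0 i : true -> 0 <= w i * P i by move=> _; rewrite mulr_ge0.
set wP := \sum_i _; set wQ := \sum_i _ in wQ_gt0 *.
rewrite {1}/perspective; case: ifPn => [/eqP wP_eq0 | wPn0].
  rewrite /wQ mulr_suml -(big_rmcond (fun i => Q i != 0)) => [|i /negPn/eqP ->];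
    last by rewrite mulr0 mul0r.
  rewrite le_eqVlt; apply/predU1P; left; apply: eq_bigr => i _.
  have /eqP := psumr_eq0P wP_ge0 wP_eq0 (i := i) isT.
  rewrite mulf_eq0 => /orP[/eqP -> | /eqP Pi0]; first by rewrite !mul0r.
  by rewrite /perspective Pi0 eqxx mulrA.
set m := wP / wQ; set d := derive1 f m.
have m0 : 0 < m by rewrite divr_gt0 // lt_def wPn0 sumr_ge0.
have -> : wQ * f m = \sum_(i | Q i != 0)
    (f m * (w i * Q i) + (d * (w i * P i) - d * m * (w i * Q i))).
  rewrite big_rmcond => [|i /negPn/eqP Qi0]; last by rewrite Qi0 PQ // !mulr0 subr0 addr0.
  rewrite big_split sumrB -!mulr_sumr /= -/wP -/wQ /m.
  by field; rewrite gt_eqF.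
apply: ler_sum => i Qi.
have Qi0 : 0 < Q i by rewrite lt_def Qi Q0.
have hli : tangent_intercepts_le f l \/ P i != 0.
  by case: hl => [|QP]; [left | right; apply: contra_neq Qi => /QP].
rewrite (_ : _ + _ = w i * (Q i * f m + d * (P i - m * Q i))); last by ring.
apply: ler_wpM2l; first exact: w0.
exact: perspective_ge_tangent m0 Qi0 (P0 i) hli.
Qed.

Lemma perspective_sum_push_le {X Y : finType} {l : R} {K : X -> Y -> R} {P Q : X -> R} :
  is_kernel K -> (forall x, 0 <= P x) -> (forall x, 0 <= Q x) ->
  abs_cont P Q -> tangent_intercepts_le f l \/ abs_cont Q P ->
  \sum_(y | push K Q y != 0) perspective f l (push K P y) (push K Q y) <=
  \sum_(x | Q x != 0) perspective f l (P x) (Q x).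
Proof.
move=> HK P0 Q0 PQ hl.
have K0 x y : 0 <= K x y by case: (HK x).
apply: (@le_trans _ _ (\sum_(y | push K Q y != 0)
    \sum_(x | Q x != 0) K x y * perspective f l (P x) (Q x))).
  apply: ler_sum => y KQy; apply: perspective_jensen => //.
  by rewrite lt_def KQy; exact: push_ge0.
rewrite big_rmcond => [|y /negPn/eqP KQy]; last first.
  apply: big1 => x Qx.
  have KQ0 i : true -> 0 <= K i y * Q i by move=> _; rewrite mulr_ge0.
  have /eqP := psumr_eq0P KQ0 KQy (i := x) isT.
  by rewrite mulf_eq0 (negPf Qx) orbF => /eqP ->; rewrite mul0r.
rewrite exchange_big le_eqVlt; apply/predU1P; left; apply: eq_bigr => x _.
by rewrite -mulr_suml (proj2 (HK x)) mul1r.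
Qed.

Lemma eta_f_le1 {X Y : finType} {K : X -> Y -> R} : is_kernel K -> (eta_f f K <= 1)%E.
Proof.
move=> HK; apply: ge_ereal_sup => _ [P [Q [[[P0 _] [Q0 _]] PQ D0 Doo ->]]].
have [l [DPQ DKPQ hl]] : exists l, [/\
    Df f P Q = (\sum_(t | Q t != 0) perspective f l (P t) (Q t))%:E,
    Df f (push K P) (push K Q) =
      (\sum_(t | push K Q t != 0) perspective f l (push K P t) (push K Q t))%:E &
    tangent_intercepts_le f l \/ abs_cont Q P].
  (* An infinite [f 0] together with a finite [Df f P Q] forces [abs_cont Q P],
     and then [l] is irrelevant. *)
  have [f0_fin | f0_inf] := boolP (f_at0 f \is a fin_num).
    have f0E : f_at0 f = (fine (f_at0 f))%:E by rewrite fineK.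
    exists (fine (f_at0 f)); split; try by apply: Df_perspective; left.
    by left; exact: f_at0_tangent_intercepts_le.
  have QP := Df_fin_abs_cont Q0 f0_inf D0 Doo.
  exists 0; split; try by right.
    by apply: Df_perspective; right.
  by apply: Df_perspective; right; exact: abs_cont_push.
have := perspective_sum_push_le HK P0 Q0 PQ hl.
rewrite DPQ lte_fin in D0; rewrite DKPQ DPQ /= -EFinM lee_fin.
by rewrite ler_pdivrMr // mul1r.
Qed.

End ConvexPos.

Lemma Df_full_support (R : realType) (T : finType) (f : R -> R) (P Q : T -> R) :
  (forall t, 0 < P t) -> (forall t, 0 < Q t) ->
  Df f P Q = (\sum_t Q t * f (P t / Q t))%:E.
Proof.
move=> P0 Q0; rewrite /Df -sumEFin big_mkcond; apply: eq_bigr => t _.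
by rewrite (gt_eqF (Q0 t)) (gt_eqF (P0 t)).
Qed.

Lemma eta_f_ge1 {R : realType} {X Y : finType} {f : R -> R} {K : X -> Y -> R}
    {P Q : X -> R} {v : R} :
  is_dist P -> is_dist Q -> abs_cont P Q -> 0 < v -> Df f P Q = v%:E ->
  Df f (push K P) (push K Q) = v%:E -> (1 <= eta_f f K)%E.
Proof.
move=> dP dQ PQ v0 DPQ DKPQ; apply: ereal_sup_ubound; exists P, Q; split => //.
- by rewrite DPQ lte_fin.
- by rewrite DPQ ltry.
- by rewrite DKPQ DPQ /= -EFinM mulfV // gt_eqF.
Qed.

Definition two_point_kernel {R : realType} {X : finType} (x1 x2 x : X) (y : bool) : R :=
  if x == x1 then (if y then 1 else 0)
  else if x == x2 then (if y then 0 else 1) else 1 / 2.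

Definition on_pair {R : realType} {X : finType} (x1 x2 : X) (a b : R) (x : X) : R :=
  if x == x1 then a else if x == x2 then b else 0.

Section TwoPointKernel.
Context {R : realType} {X : finType} {x1 x2 : X}.
Hypothesis x12 : x1 != x2.

Let K := @two_point_kernel R X x1 x2.

Lemma big_pair {V : Type} {idx : V} {op : Monoid.com_law idx} {F : X -> V} :
  (forall x, x != x1 -> x != x2 -> F x = idx) ->
  \big[op/idx]_x F x = op (F x1) (F x2).
Proof.
move=> Foff; rewrite (bigD1 x1) // (bigD1 x2) 1?eq_sym // big1 ?Monoid.mulm1 //.
by move=> x /andP[/andP[_ h1] h2]; exact: Foff.
Qed.

Lemma two_point_kernel_is_kernel : is_kernel K.
Proof.
move=> x; split.
  by move=> y; rewrite /K /two_point_kernel; case: ifP => _; case: ifP => _; case: y.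
rewrite big_bool /K /two_point_kernel; case: ifP => _ /=; first by rewrite addr0.
by case: ifP => _ /=; [rewrite add0r | field].
Qed.

Lemma sum_two_point_kernel y : \sum_x K x y = #|X|%:R / 2.
Proof.
have swap : \sum_x K x false = \sum_x K x true.
  rewrite (reindex_inj (@perm_inj _ (tperm x1 x2))) /=.
  apply: eq_bigr => x _; rewrite /K /two_point_kernel.
  case: tpermP => [-> | -> | /eqP/negPf -> /eqP/negPf ->] //;
    by rewrite !eqxx [x2 == x1]eq_sym (negPf x12).
have total : \sum_x K x true + \sum_x K x false = #|X|%:R.
  rewrite -big_split /= -sumr_const; apply: eq_bigr => x _.
  by have [_] := two_point_kernel_is_kernel x; rewrite big_bool.
by rewrite swap in total; case: y; rewrite -?swap; lra.
Qed.

Lemma kmax_two_point_kernel y : kmax K y = 1.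
Proof.
apply/le_anti/andP; split.
  apply: bigmax_le => // x _; rewrite /K /two_point_kernel.
  by case: ifP => _; case: ifP => _; case: y => //; lra.
apply: le_trans (le_bigmax _ _ (if y then x1 else x2)).
by rewrite /K /two_point_kernel; case: y; rewrite !eqxx // eq_sym (negPf x12).
Qed.

Lemma Cleak_two_point_kernel {c : R} : 0 < c ->
  (Cleak K (Qc c) <= (ln (2 / (#|X|%:R * c)))%:E)%E.
Proof.
move=> c0; apply: ge_ereal_sup => _ [P [y [[[P0 _] Pc] Py ->]]].
rewrite lee_fin /pml kmax_two_point_kernel.
have N0 : (0 : R) < #|X|%:R by rewrite ltr0n; apply/card_gt0P; exists x1.
have push_ge : #|X|%:R / 2 * c <= push K P y.
  rewrite /push -(sum_two_point_kernel y) mulr_suml; apply: ler_sum => x _.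
  by apply: ler_wpM2l => //; case: (two_point_kernel_is_kernel x).
rewrite ler_ln ?posrE ?divr_gt0 ?mulr_gt0 //.
have -> : 2 / (#|X|%:R * c) = (#|X|%:R / 2 * c)^-1 by field; rewrite ?gt_eqF.
by rewrite div1r lef_pV2 ?posrE ?mulr_gt0 ?divr_gt0.
Qed.

Let pair := @on_pair R X x1 x2.

Lemma on_pair_off a b x : x != x1 -> x != x2 -> pair a b x = 0.
Proof. by move=> /negPf h1 /negPf h2; rewrite /pair /on_pair h1 h2. Qed.

Lemma on_pair1 a b : pair a b x1 = a.
Proof. by rewrite /pair /on_pair eqxx. Qed.

Lemma on_pair2 a b : pair a b x2 = b.
Proof. by rewrite /pair /on_pair eqxx eq_sym (negPf x12). Qed.

Lemma is_dist_on_pair a b : 0 <= a -> 0 <= b -> a + b = 1 -> is_dist (pair a b).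
Proof.
move=> a0 b0 ab1; split.
  by move=> x; rewrite /pair /on_pair; case: ifP => _ //; case: ifP.
by rewrite (big_pair (on_pair_off a b)) on_pair1 on_pair2.
Qed.

Lemma push_on_pair a b : push K (pair a b) = fun y => if y then a else b.
Proof.
apply/funext => y; rewrite /push big_pair => [|x h1 h2]; last first.
  by rewrite on_pair_off ?mulr0.
rewrite on_pair1 on_pair2 /K /two_point_kernel eqxx eq_sym (negPf x12) eqxx.
by case: y => /=; rewrite !(mul1r, mul0r) ?addr0 ?add0r.
Qed.

Lemma Df_on_pair (f : R -> R) (a b a' b' : R) :
  Df f (pair a b) (pair a' b') =
  Df f (fun y : bool => if y then a else b) (fun y : bool => if y then a' else b').
Proof.
rewrite /Df big_mkcond big_pair => [|x h1 h2]; last by rewrite on_pair_off ?eqxx.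
by rewrite [RHS]big_mkcond big_bool !on_pair1 !on_pair2.
Qed.

Lemma eta_two_point_kernel_ge1 (f : R -> R) (u : R) : 0 < u < 1 ->
  0 < f (1 + u) + f (1 - u) -> (1 <= eta_f f K)%E.
Proof.
move=> /andP[u0 u1] fu.
pose P := pair ((1 + u) / 2) ((1 - u) / 2); pose Q := pair (1 / 2) (1 / 2).
have DPQ : Df f P Q = ((f (1 + u) + f (1 - u)) / 2)%:E.
  rewrite Df_on_pair Df_full_support; [| by case => /=; lra | by case => /=; lra].
  rewrite big_bool /=; congr (_%:E).
  rewrite (_ : (1 + u) / 2 / (1 / 2) = 1 + u); last by field.
  rewrite (_ : (1 - u) / 2 / (1 / 2) = 1 - u); last by field.
  lra.
apply: (eta_f_ge1 _ _ _ _ DPQ).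
- by apply: is_dist_on_pair; lra.
- by apply: is_dist_on_pair; lra.
- move=> x; rewrite /Q /P /pair /on_pair; case: ifP => _; first lra.
  by case: ifP => _ //; lra.
- lra.
- by rewrite !push_on_pair -Df_on_pair.
Qed.

End TwoPointKernel.

(* [c < #|X|^-1] only makes [Qc c] nonempty; the bound holds regardless. *)
Theorem theorem2 (R : realType) (X : finType) (c eps : R) (f : R -> R) :
  (2 <= #|X|)%N -> 0 < c -> c < (#|X|%:R)^-1 ->
  ln (2 / (#|X|%:R * c)) <= eps ->
  convex_pos f -> f 1 = 0 -> C2_pos f -> 0 < derive1 (derive1 f) 1 ->
  ereal_sup [set e : \bar R | exists (Y : finType) (K : X -> Y -> R),
               in_M eps c K /\ e = eta_f f K] = 1%E.
Proof.
move=> N2 c0 _ heps cvx f1 [df [ddf _]] f''1.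
have [x1 [x2 [_ _ x12]]] := card_gt1P N2.
have [u [u0 u1]] := convex_midpoint_gap cvx df (ddf 1 ltr01) f''1.
rewrite f1 mulr0 => fu.
apply/le_anti/andP; split.
  by apply: ge_ereal_sup => _ [Y [K [[HK _] ->]]]; exact: eta_f_le1.
have kernelK := @two_point_kernel_is_kernel R X x1 x2.
apply: ereal_sup_ubound; exists bool, (two_point_kernel x1 x2); split.
  split=> //; apply: le_trans (Cleak_two_point_kernel x12 c0) _.
  by rewrite lee_fin.
apply/le_anti; rewrite eta_f_le1 //= andbT.
by apply: (eta_two_point_kernel_ge1 x12) fu; rewrite u0 u1.
Qed.
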